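(* Let $n,m\ge1$. An abstract simplicial complex $\mathcal I$ on the vertex set $\Omega$ is affinely implementable (i.e. $\mathcal I=\mathcal I(f)$ for some affine maximizer $f$) if and only if there is a regular subdivision $\mathcal S$ of $(\Delta_{n-1})^m$ such that $F$ is a facet of $\mathcal I$ if and only if $F$ is the vertex set of a maximal cell of $\mathcal S$.
   Context: There are $n$ players and $m$ items. The allocation space is $\Omega=\{A\in\{0,1\}^{n\times m}:\sum_{i\in[n]}A_{i,j}=1\ \forall j\in[m]\}$; row $A_i$ is the bundle of player $i$. $\Omega$ is identified with the vertex set of the product $(\Delta_{n-1})^m$ of $m$ copies of the $(n-1)$-dimensional standard simplex (each column of $A$ being a vertex of $\Delta_{n-1}$). Types: $\theta=(\theta_1,\dots,\theta_n)$ with $\theta_i\in\mathbb R^m$. An allocation function $f:\mathbb R^{n\times m}\to\Omega$ is an affine maximizer if there are nonzero player weights $w_1,\dots,w_n$ and allocation weights $c_A\in\mathbb R$ ($A\in\Omega$) with $f(\theta)\in\arg\max_{A\in\Omega}\{c_A+\sum_i w_i\,\theta_i\cdot A_i\}$ for all $\theta$. Difference sets $Q_A=\mathrm{cl}\{\theta:f(\theta)=A\}$; indifference complex $\mathcal I(f)=\{\mathcal O\subseteq\Omega:\bigcap_{A\in\mathcal O}Q_A\ne\emptyset\}$. Regular subdivision of a finite point set $U$: project the upper faces (outer normal with positive last coordinate) of $\mathrm{conv}\{(u,\lambda(u)):u\in U\}$ for a height function $\lambda:U\to\mathbb R$. *)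

From HB Require Import structures.
From mathcomp Require Import all_boot all_order all_algebra.
From mathcomp Require Import reals.
Set Implicit Arguments. Unset Strict Implicit. Unset Printing Implicit Defensive.
Import Order.TTheory GRing.Theory Num.Theory.
Local Open Scope ring_scope.

(* An allocation A in Omega is encoded by the map item j |-> the unique
   player i with A_{i,j} = 1.  [allocMx A] is the 0/1 matrix in R^{n x m}
   (rows = players, columns = items), i.e. the corresponding vertex of
   (Delta_{n-1})^m. *)
Definition alloc (n m : nat) := {ffun 'I_m -> 'I_n}.

Definition allocMx (R : realType) (n m : nat) (A : alloc n m) : 'M[R]_(n, m) :=
  \matrix_(i < n, j < m) (A j == i)%:R.

Definition mdot (R : realType) (n m : nat) (a : 'M[R]_(n, m)) (A : alloc n m) : R :=
  \sum_(i < n) \sum_(j < m) a i j * allocMx R A i j.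

Definition amValue (R : realType) (n m : nat) (w : 'I_n -> R) (c : alloc n m -> R)
  (theta : 'M[R]_(n, m)) (A : alloc n m) : R :=
  c A + \sum_(i < n) w i * (\sum_(j < m) theta i j * allocMx R A i j).

Definition affine_maximizer (R : realType) (n m : nat)
  (f : 'M[R]_(n, m) -> alloc n m) : Prop :=
  exists (w : 'I_n -> R) (c : alloc n m -> R),
    (forall i, w i != 0) /\
    forall theta (B : alloc n m), amValue w c theta B <= amValue w c theta (f theta).

(* Topological closure in R^{n x m} (sup-norm balls; same topology as Euclidean). *)
Definition in_closure (R : realType) (n m : nat) (S : 'M[R]_(n, m) -> Prop)
  (x : 'M[R]_(n, m)) : Prop :=
  forall eps : R, 0 < eps ->
    exists y, S y /\ forall i j, `|x i j - y i j| < eps.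

Definition diffset (R : realType) (n m : nat) (f : 'M[R]_(n, m) -> alloc n m)
  (A : alloc n m) : 'M[R]_(n, m) -> Prop :=
  in_closure (fun theta => f theta = A).

Definition indiff_complex (R : realType) (n m : nat) (f : 'M[R]_(n, m) -> alloc n m)
  (O : {set alloc n m}) : Prop :=
  exists theta, forall A, A \in O -> diffset f A theta.

Definition simplicial_complex (n m : nat) (K : {set {set alloc n m}}) : Prop :=
  forall F G : {set alloc n m}, F \in K -> G \subset F -> G \in K.

Definition facet (n m : nat) (K : {set {set alloc n m}}) (F : {set alloc n m}) : Prop :=
  F \in K /\ forall G, G \in K -> F \subset G -> G = F.

Definition affinely_implementable (R : realType) (n m : nat)
  (K : {set {set alloc n m}}) : Prop :=
  exists f : 'M[R]_(n, m) -> alloc n m,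
    affine_maximizer f /\ forall O, O \in K <-> indiff_complex f O.

(* Regular subdivision of the point set Omega (vertices of (Delta_{n-1})^m)
   with height function lambda.  A cell is recorded by its vertex set: the
   points u of Omega whose lift (u, lambda u) lies on the upper face of
   conv{(u, lambda u)} with outer normal (a, b), b > 0, i.e. the maximizers of
   <a, u> + b * lambda u.  (Every point of Omega is a vertex of the product of
   simplices, so this is exactly the vertex set of the projected face.) *)
Definition reg_cell (R : realType) (n m : nat) (lambda : alloc n m -> R)
  (C : {set alloc n m}) : Prop :=
  exists (a : 'M[R]_(n, m)) (b : R), 0 < b /\
    C = [set u | [forall v, mdot a v + b * lambda v <= mdot a u + b * lambda u]].

Definition reg_maximal_cell (R : realType) (n m : nat) (lambda : alloc n m -> R)
  (C : {set alloc n m}) : Prop :=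
  reg_cell lambda C /\ forall C', reg_cell lambda C' -> C \subset C' -> C' = C.

From HB Require Import structures.
From mathcomp Require Import all_boot all_order all_algebra.
From mathcomp Require Import reals ring lra zify.
From Stdlib Require Import Classical_Prop.
Set Implicit Arguments. Unset Strict Implicit. Unset Printing Implicit Defensive.
Import Order.TTheory GRing.Theory Num.Theory.
Local Open Scope ring_scope.

(* For an affine maximizer with weights w and allocation weights c, the closure
   Q_A of {f = A} is exactly the set of types theta at which A maximizes
   c_A + <w theta, A>: the maximizing condition is closed, and conversely A is
   the unique maximizer along a segment from theta to a type that strictly
   exposes A.  So the faces of I(f) are the subsets of these argmax sets.  As
   theta |-> w theta is onto, the argmax sets are exactly the cells of the
   regular subdivision with heights c (an outer normal (a, b), b > 0, rescales
   to b = 1).  Finally a simplicial complex is the downward closure of its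
   facets, and the facets of the downward closure of a family of cells are its
   maximal cells; conversely, heights lambda are implemented by the affine
   maximizer with unit weights and allocation weights lambda. *)

Section MaximalSets.
Variable T : finType.
Implicit Types (P K : {set T} -> Prop) (C F G O : {set T}).

Definition maximal_in P F : Prop := P F /\ forall G, P G -> F \subset G -> G = F.

Lemma exists_maximal_superset P C : P C -> exists2 F, maximal_in P F & C \subset F.
Proof.
move=> PC; have [k] := ubnP (#|T| - #|C|)%N.
elim: k C PC => // k IHk C PC ltCk.
have [[G PG ltCG] | noG] := classic (exists2 G, P G & C \proper G).
  have [ltCG' leGT] := (proper_card ltCG, max_card G).
  have [F maxF leGF] := IHk G PG ltac:(lia).
  by exists F => //; apply: subset_trans (proper_sub ltCG) leGF.
exists C => //; split=> // G PG leCG; apply/eqP; apply: contraT => neGC.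
by case: noG; exists G; rewrite // properEneq eq_sym neGC.
Qed.

Lemma maximal_in_down_closure K P F :
  (forall O, K O <-> exists2 C, P C & O \subset C) ->
  maximal_in K F <-> maximal_in P F.
Proof.
move=> downK; have PK C : P C -> K C by move=> PC; apply/downK; exists C.
split=> [[KF maxF] | [PF maxF]].
  have [C PC leFC] := (downK F).1 KF.
  have eqCF := maxF C (PK C PC) leFC; subst C.
  by split=> // G PG; apply: maxF; apply: PK.
split=> [|G KG leFG]; first exact: PK.
have [C PC leGC] := (downK G).1 KG.
have eqCF := maxF C PC (subset_trans leFG leGC); subst C.
by apply/eqP; rewrite eqEsubset leGC leFG.
Qed.

Lemma down_closure_of_maximal K P :
  (forall F G, K F -> G \subset F -> K G) ->
  (forall F, maximal_in K F <-> maximal_in P F) ->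
  forall O, K O <-> exists2 C, P C & O \subset C.
Proof.
move=> downK maxKP O; split=> [KO | [C PC leOC]].
  have [F maxF leOF] := exists_maximal_superset KO.
  by exists F => //; exact: ((maxKP F).1 maxF).1.
have [F maxF leCF] := exists_maximal_superset PC.
by apply: downK (subset_trans leOC leCF); exact: ((maxKP F).2 maxF).1.
Qed.

End MaximalSets.

Definition argmax_set (R : numDomainType) (T : finType) (g : T -> R) : {set T} :=
  [set u | [forall v, g v <= g u]].

Lemma argmax_set_scale (R : numDomainType) (T : finType) (b : R) (g h : T -> R) :
  0 < b -> (forall v, h v = b * g v) -> argmax_set h = argmax_set g.
Proof.
move=> b_gt0 hE; apply/setP => u; rewrite !inE; apply: eq_forallb => v.
by rewrite !hE ler_pM2l.
Qed.

Lemma normr_entry_le_sum (R : numDomainType) (n m : nat) (M : 'M[R]_(n, m)) i j :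
  `|M i j| <= \sum_i0 \sum_j0 `|M i0 j0|.
Proof.
apply: (@le_trans _ _ (\sum_j0 `|M i j0|)); first by rewrite (bigD1 j) //= lerDl sumr_ge0.
by rewrite (bigD1 i) //= lerDl sumr_ge0 // => i0 _; rewrite sumr_ge0.
Qed.

Section Mdot.
Variables (R : realType) (n m : nat).
Implicit Types (a b : 'M[R]_(n, m)) (A B : alloc n m).

Lemma mdotE a A : mdot a A = \sum_(j < m) a (A j) j.
Proof.
rewrite /mdot exchange_big; apply: eq_bigr => j _.
rewrite (bigD1 (A j)) //= big1 => [|i neqi]; first by rewrite mxE eqxx mulr1 addr0.
by rewrite mxE eq_sym (negbTE neqi) mulr0.
Qed.

Lemma mdotD a b A : mdot (a + b) A = mdot a A + mdot b A.
Proof. by rewrite !mdotE -big_split; apply: eq_bigr => j _; rewrite mxE. Qed.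

Lemma mdotB a b A : mdot (a - b) A = mdot a A - mdot b A.
Proof. by rewrite !mdotE -sumrB; apply: eq_bigr => j _; rewrite !mxE. Qed.

Lemma mdotZ t a A : mdot (t *: a) A = t * mdot a A.
Proof. by rewrite !mdotE mulr_sumr; apply: eq_bigr => j _; rewrite mxE. Qed.

Lemma normr_mdot_le a A e :
  (forall i j, `|a i j| <= e) -> `|mdot a A| <= m%:R * e.
Proof.
move=> a_le; rewrite mdotE (le_trans (ler_norm_sum _ _ _)) //.
rewrite (le_trans (ler_sum _ (fun j _ => a_le (A j) j))) //.
by rewrite sumr_const card_ord mulr_natl.
Qed.

Lemma mdot_allocMx A B : mdot (allocMx R A) B = \sum_(j < m) (A j == B j)%:R.
Proof. by rewrite mdotE; apply: eq_bigr => j _; rewrite mxE eq_sym. Qed.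

Lemma mdot_allocMx_gap A B : B != A -> mdot (allocMx R A) B + 1 <= mdot (allocMx R A) A.
Proof.
move=> neBA; have [j0 neAB] : exists j0, A j0 != B j0.
  apply/existsP; apply: contraR neBA => /existsPn eqAB.
  by apply/eqP/ffunP => j; apply/esym/eqP/negPn; apply: eqAB.
rewrite !mdot_allocMx (bigD1 j0) //= [X in _ <= X](bigD1 j0) //= (negbTE neAB) eqxx.
rewrite /= mulr0n mulr1n add0r [1 + _]addrC lerD2r; apply: ler_sum => j _.
by rewrite eqxx; case: (_ == _).
Qed.

Lemma alloc_exposed (h : alloc n m -> R) A :
  exists a, forall B, B != A -> h B + mdot a B < h A + mdot a A.
Proof.
pose N := 1 + \sum_B `|h B - h A|.
have hB_le B : h B - h A <= N - 1.
  rewrite /N addrAC subrr add0r; apply: le_trans (ler_norm _) _.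
  by rewrite (bigD1 B) //= lerDl sumr_ge0.
exists (N *: allocMx R A) => B neBA; rewrite !mdotZ.
have gap := mdot_allocMx_gap neBA; have := hB_le B.
have : 1 <= N by rewrite /N lerDl sumr_ge0.
nra.
Qed.

End Mdot.

Lemma in_closure_segment (R : realType) (n m : nat) (S : 'M[R]_(n, m) -> Prop) th ts :
  (forall t, 0 < t <= 1 -> S (th + t *: (ts - th))) -> in_closure S th.
Proof.
move=> S_seg eps eps_gt0.
pose D := 1 + \sum_i \sum_j `|(ts - th) i j|.
have D_ge1 : 1 <= D by rewrite /D lerDl; do 2!(apply: sumr_ge0 => ? _).
pose t := eps / (D + eps).
have De_gt0 : 0 < D + eps by lra.
have tDe : t * (D + eps) = eps by rewrite /t divfK // gt_eqF.
have t_gt0 : 0 < t by rewrite /t divr_gt0.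
exists (th + t *: (ts - th)); split; first by apply: S_seg; nra.
move=> i j; have -> : th i j - (th + t *: (ts - th)) i j = - (t * (ts - th) i j).
  by rewrite !mxE; ring.
rewrite normrN normrM (gtr0_norm t_gt0).
have : `|(ts - th) i j| <= D by rewrite /D (le_trans (normr_entry_le_sum _ _ _)) // lerDr.
nra.
Qed.

Section AffineMaximizer.
Variables (R : realType) (n m : nat) (w : 'I_n -> R) (c : alloc n m -> R).
Hypothesis w_neq0 : forall i, w i != 0.
Implicit Types (th ts y : 'M[R]_(n, m)) (A B : alloc n m).

Definition weighted th : 'M[R]_(n, m) := diag_mx (\row_i w i) *m th.

Lemma amValue_mdot th A : amValue w c th A = c A + mdot (weighted th) A.
Proof.
congr (_ + _); apply: eq_bigr => i _; rewrite mulr_sumr; apply: eq_bigr => j _.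
by rewrite /weighted mul_diag_mx !mxE mulrA.
Qed.

Lemma weighted_surj a : exists th, weighted th = a.
Proof.
exists (diag_mx (\row_i (w i)^-1) *m a); apply/matrixP => i j.
by rewrite /weighted !mul_diag_mx !mxE mulrA divff ?mul1r.
Qed.

Lemma amValue_segment th ts t A :
  amValue w c (th + t *: (ts - th)) A =
  (1 - t) * amValue w c th A + t * amValue w c ts A.
Proof.
by rewrite !amValue_mdot /weighted mulmxDr -scalemxAr mulmxBr mdotD mdotZ mdotB; ring.
Qed.

Lemma amValue_exposed A :
  exists ts, forall B, B != A -> amValue w c ts B < amValue w c ts A.
Proof.
have [a a_exp] := alloc_exposed c A; have [ts w_ts] := weighted_surj a.
by exists ts => B neBA; rewrite !amValue_mdot w_ts; apply: a_exp.
Qed.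

Lemma normr_amValueB_le th y A (e : R) : 0 <= e ->
  (forall i j, `|th i j - y i j| <= e) ->
  `|amValue w c th A - amValue w c y A| <= m%:R * ((\sum_i `|w i|) * e).
Proof.
move=> e_ge0 thy_le; rewrite !amValue_mdot opprD addrACA subrr add0r -mdotB /weighted -mulmxBr.
apply: normr_mdot_le => i j; rewrite mul_diag_mx !mxE normrM.
by apply: ler_pM => //; rewrite (bigD1 i) //= lerDl sumr_ge0.
Qed.

Lemma amValue_le_closed th A B :
  in_closure (fun y => amValue w c y B <= amValue w c y A) th ->
  amValue w c th B <= amValue w c th A.
Proof.
move=> cl_le; rewrite leNgt; apply/negP => lt_AB.
pose d := amValue w c th B - amValue w c th A.
pose W := \sum_i `|w i|; pose L := m%:R * W.
have d_gt0 : 0 < d by rewrite subr_gt0.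
have L_ge0 : 0 <= L by rewrite mulr_ge0 // sumr_ge0.
pose eps := d / (2 * L + 1).
have epsL : eps * (2 * L + 1) = d by rewrite /eps divfK // gt_eqF //; lra.
have eps_gt0 : 0 < eps by rewrite /eps divr_gt0 //; lra.
have [y [y_le near_y]] := cl_le eps eps_gt0.
have near_y' i j : `|th i j - y i j| <= eps by apply/ltW.
have := normr_amValueB_le A (ltW eps_gt0) near_y'.
have := normr_amValueB_le B (ltW eps_gt0) near_y'.
rewrite -/W mulrA -/L !ler_norml; move: y_le; rewrite /d in epsL.
nra.
Qed.

Lemma reg_cellE C : reg_cell c C <-> exists th, C = argmax_set (amValue w c th).
Proof.
split=> [[a [b [b_gt0 ->]]] | [th ->]].
  have [th w_th] := weighted_surj (b^-1 *: a); exists th.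
  have b_neq0 : b != 0 by rewrite gt_eqF.
  apply: argmax_set_scale b_gt0 _ => v.
  by rewrite amValue_mdot w_th mdotZ mulrDr mulrA divff // mul1r addrC.
exists (weighted th), 1; split=> //; apply/esym/(argmax_set_scale ltr01) => v.
by rewrite amValue_mdot !mul1r addrC.
Qed.

Variable f : 'M[R]_(n, m) -> alloc n m.
Hypothesis f_max : forall th B, amValue w c th B <= amValue w c th (f th).

Lemma diffsetE A th : diffset f A th <-> A \in argmax_set (amValue w c th).
Proof.
split=> [A_cl | A_max].
  rewrite inE; apply/forallP => B; apply: amValue_le_closed.
  move=> eps eps_gt0; have [y [fyA near_y]] := A_cl eps eps_gt0.
  by exists y; split=> //; rewrite -fyA.
have [ts ts_exp] := amValue_exposed A.
apply: (in_closure_segment (ts := ts)) => t /andP[t_gt0 t_le1].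
apply/eqP; apply: contraT => neqA; have := f_max (th + t *: (ts - th)) A.
move: A_max; rewrite inE => /forallP/(_ (f (th + t *: (ts - th)))).
have := ts_exp _ neqA; rewrite !amValue_segment.
nra.
Qed.

Lemma indiff_complexE O :
  indiff_complex f O <-> exists2 C, reg_cell c C & O \subset C.
Proof.
split=> [[th O_diff] | [C /reg_cellE[th ->] leOC]].
  exists (argmax_set (amValue w c th)); first by apply/reg_cellE; exists th.
  by apply/subsetP => A /O_diff/diffsetE.
by exists th => A /(subsetP leOC)/diffsetE.
Qed.

End AffineMaximizer.

Theorem mainTheorem6 (R : realType) (n m : nat) (hn : (1 <= n)%N) (hm : (1 <= m)%N)
  (K : {set {set alloc n m}}) (hK : simplicial_complex K) :
  affinely_implementable R K <->
  exists lambda : alloc n m -> R,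
    forall F : {set alloc n m}, facet K F <-> reg_maximal_cell lambda F.
Proof.
split=> [[f [[w [c [w_neq0 f_max]]] K_indiff]] | [lambda facetE]].
  exists c => F; apply: (@maximal_in_down_closure _ (fun G => G \in K) (reg_cell c)) => O.
  exact: iff_trans (K_indiff O) (indiff_complexE w_neq0 f_max O).
pose w : 'I_n -> R := fun=> 1.
have w_neq0 i : w i != 0 by exact: oner_neq0.
pose A0 : alloc n m := [ffun=> Ordinal hn].
pose f th := [arg max_(A > A0) amValue w lambda th A]%O.
have f_max th B : amValue w lambda th B <= amValue w lambda th (f th).
  by rewrite /f; case: arg_maxP => // A _; apply.
exists f; split=> [|O]; first by exists w, lambda.
apply: iff_trans (iff_sym (indiff_complexE w_neq0 f_max O)).
exact: (@down_closure_of_maximal _ (fun G => G \in K) (reg_cell lambda)).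
Qed.
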